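(* Let $M$ be a matroid of rank $r$ on a finite set $E$, and let $\mathcal H$ be the set of hyperplanes of $M$. Suppose that for each $H\in\mathcal H$ a set $U_H$ is given with $\mathrm{cl}_{r-2}(U_H)=H$. Let \[ \mathcal U=\{U_H : H\in\mathcal H,\ |U_H|\ge r\}. \] Then $M=M^{(r-1)}\uparrow\mathcal U$.
   Context: For a matroid $M$ with independent sets $\mathcal I$, its rank-$k$ truncation is $M^{(k)}=(E,\{I\in\mathcal I : |I|\le k\})$. For a matroid $N$ of rank $\rho$, $T(N)=N^{(\rho-1)}$; a matroid $N'$ is an erection of $N$ if $T(N')=N$ or $N'=N$. A set $X$ is $k$-closed in $M$ if $\mathrm{cl}_M(Y)\subseteq X$ for all $Y\subseteq X$ with $|Y|\le k$; $\mathrm{cl}_k(X)$ is the intersection of all $k$-closed sets containing $X$ (so $\mathrm{cl}_k(X)$ is the smallest $k$-closed superset of $X$). Knuth's procedure on input a matroid $N$ of rank $\rho$ on $E$ and $\mathcal U\subseteq 2^E$: initialise $\mathcal H\leftarrow\mathcal U\cup\{F\cup\{e\}: F \text{ a hyperplane of } N,\ e\notin F\}$; while there are distinct $H,H'\in\mathcal H$ with $r_N(H\cap H')=\rho$, replace them by $H\cup H'$. It is known (Knuth) that the output $\mathcal H(N,\mathcal U)$ does not depend on the choices made and is the set of rank-$\rho$ flats of an erection of $N$; $N\uparrow\mathcal U$ denotes this erection (it equals $N$ when $\mathcal H(N,\mathcal U)=\{E\}$, and otherwise has rank $\rho+1$). *)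

From Stdlib Require Import Relations.
From mathcomp Require Import all_boot.
Set Implicit Arguments. Unset Strict Implicit. Unset Printing Implicit Defensive.

Section Matroids.
Variable E : finType.
Implicit Types (I : {set {set E}}) (X Y Z : {set E}).

(* Independence axioms of a matroid on the ground set E (the whole finType). *)
Definition is_matroid I : Prop :=
  [/\ set0 \in I,
      (forall X Y, Y \in I -> X \subset Y -> X \in I) &
      (forall X Y, X \in I -> Y \in I -> #|X| < #|Y| ->
          exists2 e, e \in Y :\: X & e |: X \in I)].

Definition rk I X : nat := \max_(Y in I | Y \subset X) #|Y|.
Definition mrank I : nat := rk I setT.
Definition cl I X : {set E} := [set e | rk I (e |: X) == rk I X].
Definition flat I X : bool := cl I X == X.
Definition flats_of_rank I (k : nat) : {set {set E}} :=
  [set X | flat I X & rk I X == k].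
Definition hyperplanes I : {set {set E}} := flats_of_rank I (mrank I).-1.

Definition truncation I (k : nat) : {set {set E}} := [set X in I | #|X| <= k].

Definition kclosed I (k : nat) X : bool :=
  [forall Y : {set E}, (Y \subset X) ==> (#|Y| <= k) ==> (cl I Y \subset X)].
Definition clk I (k : nat) X : {set E} :=
  \bigcap_(Z | kclosed I k Z && (X \subset Z)) Z.

Definition knuth_init N (U : {set {set E}}) : {set {set E}} :=
  U :|: [set X | [exists F in hyperplanes N, exists e in ~: F, X == e |: F]].

Definition knuth_step N (Hs Hs' : {set {set E}}) : Prop :=
  exists H H', [/\ H \in Hs, H' \in Hs, H != H',
                   rk N (H :&: H') = mrank N &
                   Hs' = (Hs :\ H :\ H') :|: [set H :|: H']].

Definition knuth_terminal N (Hs : {set {set E}}) : Prop :=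
  forall H H', H \in Hs -> H' \in Hs -> H != H' -> rk N (H :&: H') <> mrank N.

Definition knuth_output N U (Hs : {set {set E}}) : Prop :=
  clos_refl_trans _ (knuth_step N) (knuth_init N U) Hs /\ knuth_terminal N Hs.

Definition is_knuth_erection M N U : Prop :=
  (exists Hs, knuth_output N U Hs) /\
  forall Hs, knuth_output N U Hs ->
    (Hs = [set setT] /\ M = N) \/
    [/\ Hs <> [set setT], mrank M = (mrank N).+1 &
        flats_of_rank M (mrank N) = Hs].

End Matroids.

From Stdlib Require Import Relations.
From mathcomp Require Import all_boot zify.
Set Implicit Arguments. Unset Strict Implicit. Unset Printing Implicit Defensive.

(* Let r be the rank of M and N = M^(r-1).  Along Knuth's procedure every member
   of the family has M-rank r-1, and every set F + e (F a flat of rank r-2,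
   e outside F) and every member of U lies inside some member: this holds
   initially because the hyperplanes of N are the flats of M of rank r-2, and a
   merge preserves it since two merged members meet in M-rank at least r-1, so
   their union still has rank r-1 by submodularity.  In a terminal family
   distinct members meet in rank below r-1, which makes each member A
   (r-2)-closed: a set Y of size at most r-2 in A has a basis J that extends to
   a basis B of A, and for b in B - J the member containing B + cl(B - b) must
   be A, so cl(Y) is in cl(B - b), hence in A.  The member covering U_H then
   contains cl_{r-2}(U_H) = H, and rank considerations show that the final
   family is exactly the set of hyperplanes of M, i.e. its flats of rank r-1. *)

Section MatroidTheory.
Variables (E : finType) (I : {set {set E}}).
Hypothesis matroidI : is_matroid I.
Implicit Types (X Y F J B : {set E}) (e : E).

Let indep0 : set0 \in I. Proof. by case: matroidI. Qed.

Lemma indep_subset X Y : Y \in I -> X \subset Y -> X \in I.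
Proof. by case: matroidI => _ sub _; apply: sub. Qed.

Let indep_augment X Y : X \in I -> Y \in I -> #|X| < #|Y| ->
  exists2 e, e \in Y :\: X & e |: X \in I.
Proof. by case: matroidI => _ _; apply. Qed.

Lemma card_le_rk X J : J \in I -> J \subset X -> #|J| <= rk I X.
Proof. by move=> JI JX; apply: (@leq_bigmax_cond _ _ (fun J => #|J|) J); rewrite JI. Qed.

Lemma rk_le_card X : rk I X <= #|X|.
Proof. by apply/bigmax_leqP => J /andP[_ /subset_leq_card]. Qed.

Lemma exists_basis X : exists2 B, (B \in I) && (B \subset X) & #|B| = rk I X.
Proof.
have : 0 < #|[pred B | (B \in I) && (B \subset X)]|.
  by apply/card_gt0P; exists set0; rewrite inE indep0 sub0set.
case/(eq_bigmax_cond (fun B => #|B|)) => B; rewrite inE => BX maxB.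
by exists B => //; exact: esym maxB.
Qed.

Lemma rkS X Y : X \subset Y -> rk I X <= rk I Y.
Proof.
move=> XY; have [B /andP[BI BX] <-] := exists_basis X.
exact: card_le_rk BI (subset_trans BX XY).
Qed.

Lemma indepE X : (X \in I) = (rk I X == #|X|).
Proof.
apply/idP/eqP => [XI | rkX]; first by apply/eqP; rewrite eqn_leq rk_le_card card_le_rk.
have [B /andP[BI BX] rkB] := exists_basis X.
suff -> : X = B by [].
by apply/eqP; rewrite eq_sym eqEcard BX rkB rkX /=.
Qed.

Lemma rk_indep X : X \in I -> rk I X = #|X|.
Proof. by rewrite indepE => /eqP. Qed.

Lemma rkU1 e X : rk I (e |: X) <= (rk I X).+1.
Proof.
have [B /andP[BI BeX] <-] := exists_basis (e |: X).
have : #|B :\ e| <= rk I X.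
  by apply: card_le_rk; [exact: indep_subset BI (subsetDl _ _) | rewrite subDset].
by rewrite (cardsD1 e B); case: (e \in B) => /=; lia.
Qed.

Lemma basis_extend X J : J \in I -> J \subset X ->
  exists2 B, [/\ B \in I, J \subset B & B \subset X] & #|B| = rk I X.
Proof.
have [n] := ubnP (rk I X - #|J|); elim: n J => // n IH J ltJn JI JX.
have [rkX | ltJX] := leqP (rk I X) #|J|.
  by exists J => //; apply/eqP; rewrite eqn_leq card_le_rk.
have [C /andP[CI CX] rkC] := exists_basis X.
have [|e] := indep_augment JI CI; first by rewrite rkC.
rewrite inE => /andP[eJ eC] eJI.
have eJX : e |: J \subset X by rewrite subUset sub1set (subsetP CX).
have [|B [BI eJB BX] rkB] := IH (e |: J) _ eJI eJX; first by rewrite cardsU1 eJ /=; lia.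
by exists B => //; split=> //; apply: subset_trans (subsetUr _ _) eJB.
Qed.

Lemma rk_submod X Y : rk I (X :|: Y) + rk I (X :&: Y) <= rk I X + rk I Y.
Proof.
have [C /andP[CI CXY] rkC] := exists_basis (X :&: Y).
have [B [BI CB BXY] rkB] :=
  basis_extend CI (subset_trans CXY (subset_trans (subsetIl X Y) (subsetUl X Y))).
have BZ Z : #|B :&: Z| <= rk I Z.
  by apply: card_le_rk (subsetIr _ _); apply: indep_subset BI (subsetIl _ _).
have BX := BZ X; have BY := BZ Y.
have BXUY : (B :&: X) :|: (B :&: Y) = B by rewrite -setIUr; apply/setIidPl.
have CBXY : #|C| <= #|(B :&: X) :&: (B :&: Y)|.
  by apply: subset_leq_card; rewrite setIACA setIid subsetI CB.
by have := cardsUI (B :&: X) (B :&: Y); rewrite BXUY; lia.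
Qed.

Lemma subset_cl X : X \subset cl I X.
Proof. by apply/subsetP => x xX; rewrite inE (setUidPr _) // sub1set. Qed.

Lemma rk_notin_cl e X : e \notin cl I X -> rk I (e |: X) = (rk I X).+1.
Proof.
rewrite inE => /eqP neq; have := rkU1 e X; have := rkS (subsetUr [set e] X); lia.
Qed.

Lemma rk_cl X : rk I (cl I X) = rk I X.
Proof.
apply/eqP; rewrite eqn_leq (rkS (subset_cl X)) andbT leqNgt; apply/negP => ltX.
have [J /andP[JI JX] rkJ] := exists_basis X.
have [B [BI JB BclX] rkB] := basis_extend JI (subset_trans JX (subset_cl X)).
have /card_gt0P[e] : 0 < #|B :\: J| by rewrite cardsD (setIidPr JB); lia.
rewrite inE => /andP[eJ eB].
have := subsetP BclX e eB; rewrite inE => /eqP rkeX.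
have : #|e |: J| <= rk I (e |: X).
  by apply: card_le_rk (setUS _ JX); apply: indep_subset BI _; rewrite subUset sub1set eB.
by rewrite cardsU1 eJ rkeX /=; lia.
Qed.

Lemma clS X Y : X \subset Y -> cl I X \subset cl I Y.
Proof.
move=> XY; apply/subsetP => e; rewrite !inE => /eqP rkeX.
have := rk_submod (e |: X) Y; rewrite -setUA (setUidPr XY).
have : rk I X <= rk I ((e |: X) :&: Y) by apply: rkS; rewrite subsetI subsetUr.
have := rkS (subsetUr [set e] Y).
by move=> *; apply/eqP; lia.
Qed.

Lemma cl_id X : cl I (cl I X) = cl I X.
Proof.
apply/eqP; rewrite eqEsubset subset_cl andbT.
apply/subsetP => e; rewrite !inE rk_cl => /eqP rkeclX.
have := rkS (setUS [set e] (subset_cl X)); have := rkS (subsetUr [set e] X).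
by move=> *; apply/eqP; lia.
Qed.

Lemma sub_cl_rk_eq J X : J \subset X -> rk I J = rk I X -> X \subset cl I J.
Proof.
move=> JX rkJ; apply/subsetP => x xX; rewrite inE.
have : rk I (x |: J) <= rk I X by apply: rkS; rewrite subUset sub1set xX.
by have := rkS (subsetUr [set x] J); move=> *; apply/eqP; lia.
Qed.

Lemma cl_kclosed k X : kclosed I k (cl I X).
Proof.
apply/forallP => Y; apply/implyP => YX; apply/implyP => _.
by rewrite -(cl_id X); apply: clS.
Qed.

Lemma subset_clk k X : X \subset clk I k X.
Proof. by apply/bigcapsP => Z /andP[]. Qed.

Lemma clk_minimal k X Y : kclosed I k Y -> X \subset Y -> clk I k X \subset Y.
Proof. by move=> kY XY; apply: (@bigcap_inf _ _ Y); rewrite kY XY. Qed.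

Lemma rk_clk k X : rk I (clk I k X) = rk I X.
Proof.
apply/eqP; rewrite eqn_leq (rkS (subset_clk k X)) andbT -(rk_cl X).
exact/rkS/clk_minimal/subset_cl/cl_kclosed.
Qed.

Lemma hyperplaneE F : (F \in hyperplanes I) = flat I F && (rk I F == (mrank I).-1).
Proof. by rewrite inE. Qed.

Lemma cl_hyperplane X : rk I X = (mrank I).-1 -> cl I X \in hyperplanes I.
Proof. by move=> rkX; rewrite hyperplaneE /flat cl_id rk_cl rkX !eqxx. Qed.

End MatroidTheory.

Section Truncation.
Variables (E : finType) (I : {set {set E}}).
Hypothesis matroidI : is_matroid I.
Implicit Types (X F : {set E}) (k : nat).

Lemma rk_truncation k X : rk (truncation I k) X = minn (rk I X) k.
Proof.
apply/eqP; rewrite eqn_leq; apply/andP; split.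
  apply/bigmax_leqP => J /andP[]; rewrite inE => /andP[JI Jk] JX.
  by rewrite leq_min Jk card_le_rk.
have [B /andP[BI BX] rkB] := exists_basis matroidI X.
have /card_geqP[s [s_uniq s_size sB]] : minn (rk I X) k <= #|B| by rewrite rkB geq_minl.
have sBset : [set x in s] \subset B by apply/subsetP => x; rewrite inE; apply: sB.
have card_s : #|[set x in s]| = minn (rk I X) k by rewrite cardsE -s_size; apply/card_uniqP.
rewrite -card_s; apply: card_le_rk (subset_trans sBset BX).
by rewrite inE card_s geq_minr (indep_subset matroidI BI sBset).
Qed.

Lemma mrank_truncation k : k <= mrank I -> mrank (truncation I k) = k.
Proof. by move=> kr; rewrite /mrank rk_truncation; apply/minn_idPr. Qed.

Lemma cl_truncation k X : rk I X < k -> cl (truncation I k) X = cl I X.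
Proof.
move=> ltXk; apply/setP => x; rewrite !inE !rk_truncation.
have := rkU1 matroidI x X; have := rkS matroidI (subsetUr [set x] X).
by move=> *; apply/eqP/eqP; lia.
Qed.

Lemma hyperplanes_truncation k F : 0 < k -> k <= mrank I ->
  (F \in hyperplanes (truncation I k)) = flat I F && (rk I F == k.-1).
Proof.
move=> k_gt0 kr; rewrite hyperplaneE mrank_truncation // rk_truncation.
have [ltFk | leFk] := ltnP (rk I F) k.
  by rewrite /flat cl_truncation //; congr (_ && _); apply/eqP/eqP; lia.
have -> : (k == k.-1) = false by apply/eqP; lia.
have -> : (rk I F == k.-1) = false by apply/eqP; lia.
by rewrite !andbF.
Qed.

End Truncation.

Section KnuthProcedure.
Variables (E : finType) (N : {set {set E}}).
Implicit Types (Hs : {set {set E}}) (X Y : {set E}).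

Definition covers Hs X : Prop := exists2 A, A \in Hs & X \subset A.

Lemma covers_sub Hs X Y : covers Hs X -> Y \subset X -> covers Hs Y.
Proof. by case=> A AHs XA YX; exists A => //; apply: subset_trans YX XA. Qed.

Lemma knuth_step_covers Hs Hs' X : knuth_step N Hs Hs' -> covers Hs X -> covers Hs' X.
Proof.
case=> H [H' [_ _ _ _ ->]] [A AHs]; have [-> | neqAH] := eqVneq A H => XA.
  by exists (H :|: H'); rewrite ?inE ?eqxx ?orbT // (subset_trans XA (subsetUl _ _)).
move: XA; have [-> | neqAH'] := eqVneq A H' => XA.
  by exists (H :|: H'); rewrite ?inE ?eqxx ?orbT // (subset_trans XA (subsetUr _ _)).
by exists A; rewrite // !inE neqAH neqAH' AHs.
Qed.

Lemma card_knuth_step Hs Hs' : knuth_step N Hs Hs' -> #|Hs'| < #|Hs|.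
Proof.
case=> H [H' [HHs H'Hs neqHH' _ ->]].
have := cardsD1 H Hs; have := cardsD1 H' (Hs :\ H).
rewrite HHs !inE eq_sym neqHH' H'Hs cardsU cards1 /=; lia.
Qed.

Lemma knuth_output_exists U : exists Hs, knuth_output N U Hs.
Proof.
suff [Hs reach term] : exists2 Hs, clos_refl_trans _ (knuth_step N) (knuth_init N U) Hs
                                  & knuth_terminal N Hs by exists Hs.
move: (knuth_init N U) => Hs0.
have [n] := ubnP #|Hs0|; elim: n Hs0 => // n IH Hs0 ltHs0n.
have [/existsP[H /existsP[H' /and4P[HHs H'Hs neqHH' /eqP rkHH']]] | noMerge] :=
  boolP [exists H, exists H',
           [&& H \in Hs0, H' \in Hs0, H != H' & rk N (H :&: H') == mrank N]].
  set Hs1 := (Hs0 :\ H :\ H') :|: [set H :|: H'].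
  have step : knuth_step N Hs0 Hs1 by exists H, H'.
  have [|Hs reach term] := IH Hs1; first exact: leq_trans (card_knuth_step step) ltHs0n.
  by exists Hs => //; apply: rt_trans (rt_step _ _ _ _ step) reach.
exists Hs0; first exact: rt_refl.
move=> H H' HHs H'Hs neqHH' rkHH'; case/negP: noMerge.
by apply/existsP; exists H; apply/existsP; exists H'; rewrite HHs H'Hs neqHH' rkHH' eqxx.
Qed.

End KnuthProcedure.

Section ErectionOfTruncation.
Variables (E : finType) (I : {set {set E}}).
Hypothesis matroidI : is_matroid I.
Hypothesis rank_ge2 : 2 <= mrank I.
Implicit Types (Hs U : {set {set E}}) (A B C F X Y : {set E}).

Local Notation r := (mrank I).
Local Notation N := (truncation I (mrank I).-1).

Definition knuth_invariant U Hs : Prop :=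
  [/\ forall A, A \in Hs -> rk I A = r.-1,
      forall F e, flat I F -> rk I F = r - 2 -> e \notin F -> covers Hs (e |: F)
    & forall X, X \in U -> covers Hs X].

Lemma knuth_invariant_init U :
  (forall X, X \in U -> rk I X = r.-1) -> knuth_invariant U (knuth_init N U).
Proof.
have hypN F : (F \in hyperplanes N) = flat I F && (rk I F == r - 2).
  by rewrite hyperplanes_truncation ?subn2 ?leq_pred //; lia.
move=> rkU; split.
- move=> A; rewrite !inE => /orP[/rkU // | /existsP[F /andP[]]].
  rewrite hypN => /andP[/eqP clF /eqP rkF] /existsP[e /andP[]].
  rewrite inE => eF /eqP ->; rewrite rk_notin_cl ?clF // rkF; lia.
- move=> F e flatF rkF eF; exists (e |: F) => //.
  rewrite !inE; apply/orP; right; apply/existsP; exists F.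
  by rewrite hypN flatF rkF eqxx; apply/existsP; exists e; rewrite inE eF eqxx.
- by move=> X XU; exists X; rewrite ?inE ?XU.
Qed.

Lemma knuth_invariant_step U Hs Hs' :
  knuth_step N Hs Hs' -> knuth_invariant U Hs -> knuth_invariant U Hs'.
Proof.
move=> step [rkHs coverF coverU]; split.
- case: step => H [H' [HHs H'Hs _ rkHH' ->]] A; rewrite !inE.
  case/orP => [/andP[_ /andP[_ /rkHs //]] | /eqP ->].
  rewrite (rk_truncation matroidI) (mrank_truncation matroidI (leq_pred _)) in rkHH'.
  have := rk_submod matroidI H H'; have := rkS matroidI (subsetUl H H').
  by rewrite (rkHs _ HHs) (rkHs _ H'Hs); lia.
- by move=> F e flatF rkF eF; apply: knuth_step_covers step (coverF F e flatF rkF eF).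
- by move=> X XU; apply: knuth_step_covers step (coverU X XU).
Qed.

Lemma knuth_invariant_reach U Hs :
  (forall X, X \in U -> rk I X = r.-1) ->
  clos_refl_trans _ (knuth_step N) (knuth_init N U) Hs -> knuth_invariant U Hs.
Proof.
move=> rkU reach; move: (knuth_invariant_init rkU).
elim: reach => [Hs0 Hs1 step | // | Hs0 Hs1 Hs2 _ IH1 _ IH2 /IH1 /IH2 //].
exact: knuth_invariant_step.
Qed.

Section TerminalFamily.
Variables (U Hs : {set {set E}}).
Hypotheses (invHs : knuth_invariant U Hs) (termHs : knuth_terminal N Hs).

Lemma terminal_eq A C : A \in Hs -> C \in Hs -> r.-1 <= rk I (A :&: C) -> A = C.
Proof.
move=> AHs CHs rkAC; have [// | neqAC] := eqVneq A C.
case: (termHs AHs CHs neqAC).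
by rewrite (rk_truncation matroidI) (mrank_truncation matroidI (leq_pred _)); apply/minn_idPr.
Qed.

Lemma covers_basis B b : B \in I -> #|B| = r.-1 -> b \in B ->
  covers Hs (b |: cl I (B :\ b)).
Proof.
move=> BI cardB bB; case: invHs => _ coverF _.
have cardBb : #|B :\ b| = r - 2 by move: cardB; rewrite (cardsD1 b B) bB; lia.
have rkBb : rk I (B :\ b) = r - 2.
  by rewrite rk_indep ?cardBb // (indep_subset matroidI BI (subsetDl _ _)).
apply: coverF; first by rewrite /flat cl_id.
  by rewrite rk_cl.
by rewrite inE (setD1K bB) rk_indep // rkBb cardB; apply/eqP; lia.
Qed.

Lemma member_kclosed A : A \in Hs -> kclosed I (r - 2) A.
Proof.
move=> AHs; apply/forallP => Y; apply/implyP => YA; apply/implyP => cardY.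
have [rkHs _ _] := invHs.
have [J /andP[JI JY] rkJ] := exists_basis matroidI Y.
have [B [BI JB BA] cardB] := basis_extend matroidI JI (subset_trans JY YA).
rewrite rkHs // in cardB.
have /card_gt0P[b] : 0 < #|B :\: J|.
  by rewrite cardsD (setIidPr JB) rkJ; have := rk_le_card I Y; lia.
rewrite inE => /andP[bJ bB].
have [C CHs bclC] := covers_basis BI cardB bB.
have BC : B \subset C.
  by apply: subset_trans bclC; rewrite -{1}(setD1K bB) setUS ?subset_cl.
have -> : A = C.
  by apply: terminal_eq AHs CHs _; rewrite -cardB card_le_rk // subsetI BA.
have JBb : J \subset B :\ b.
  apply/subsetP => x xJ; rewrite !inE (subsetP JB x xJ) andbT.
  by apply: contraNneq bJ => <-.
have clYJ : cl I Y \subset cl I J.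
  by rewrite -(cl_id matroidI J) clS // sub_cl_rk_eq // rk_indep.
apply: subset_trans clYJ (subset_trans (clS matroidI JBb) _).
exact: subset_trans (subsetUr _ _) bclC.
Qed.

End TerminalFamily.

Section GeneratedHyperplanes.
Variable UH : {set E} -> {set E}.
Hypothesis clk_UH : forall H, H \in hyperplanes I -> clk I (r - 2) (UH H) = H.
Local Notation U := [set UH H | H in hyperplanes I & r <= #|UH H|].

Lemma rk_generator H : H \in hyperplanes I -> rk I (UH H) = r.-1.
Proof.
move=> HH; rewrite -(rk_clk matroidI (r - 2)) clk_UH //.
by move: HH; rewrite hyperplaneE => /andP[_ /eqP].
Qed.

Section Output.
Variable Hs : {set {set E}}.
Hypotheses (invHs : knuth_invariant U Hs) (termHs : knuth_terminal N Hs).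

Lemma covers_generator P : P \in hyperplanes I -> covers Hs (UH P).
Proof.
move=> PH; have rkUP := rk_generator PH.
have [rUP | ltUP] := leqP r #|UH P|.
  by case: invHs => _ _; apply; apply/imsetP; exists P; rewrite // inE PH.
have cardUP : #|UH P| = r.-1 by have := rk_le_card I (UH P); lia.
have UPI : UH P \in I by rewrite (indepE matroidI) rkUP cardUP.
have /card_gt0P[b bUP] : 0 < #|UH P| by lia.
apply: covers_sub (covers_basis invHs UPI cardUP bUP) _.
by rewrite -{1}(setD1K bUP) setUS ?subset_cl.
Qed.

Lemma hyperplane_mem P : P \in hyperplanes I -> P \in Hs.
Proof.
move=> PH; have [rkHs _ _] := invHs; have [A AHs UPA] := covers_generator PH.
have PA : P \subset A.
  by rewrite -(clk_UH PH); apply: clk_minimal (member_kclosed invHs termHs AHs) UPA.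
move: PH; rewrite hyperplaneE => /andP[/eqP clP /eqP rkP].
suff -> : P = A by [].
by apply/eqP; rewrite eqEsubset PA -clP sub_cl_rk_eq // rkP rkHs.
Qed.

Lemma mem_hyperplane A : A \in Hs -> A \in hyperplanes I.
Proof.
move=> AHs; have [rkHs _ _] := invHs.
have clAH := cl_hyperplane matroidI (rkHs A AHs).
suff -> : A = cl I A by exact: clAH.
apply: (terminal_eq termHs AHs (hyperplane_mem clAH)).
by rewrite (setIidPl (subset_cl I A)) rkHs.
Qed.

End Output.

Lemma knuth_output_hyperplanes Hs : knuth_output N U Hs -> Hs = hyperplanes I.
Proof.
case=> reach termHs.
have rkU X : X \in U -> rk I X = r.-1.
  by case/imsetP=> H; rewrite inE => /andP[HH _] ->; apply: rk_generator.
have invHs := knuth_invariant_reach rkU reach.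
by apply/setP => A; apply/idP/idP; [apply: mem_hyperplane | apply: hyperplane_mem].
Qed.

End GeneratedHyperplanes.

End ErectionOfTruncation.

Unset Implicit Arguments.

Theorem lemma4p1 (E : finType) (I : {set {set E}}) (UH : {set E} -> {set E}) :
  is_matroid I ->
  2 <= mrank I ->
  (forall H, H \in hyperplanes I -> clk I (mrank I - 2) (UH H) = H) ->
  is_knuth_erection I (truncation I (mrank I).-1)
    [set UH H | H in hyperplanes I & mrank I <= #|UH H|].
Proof.
move=> matroidI rank_ge2 clk_UH; split; first exact: knuth_output_exists.
move=> Hs /(knuth_output_hyperplanes matroidI rank_ge2 clk_UH) ->.
have mrankN := mrank_truncation matroidI (leq_pred (mrank I)).
right; split; rewrite ?mrankN //; last by lia.
move=> hypT; have : setT \in hyperplanes I by rewrite hypT set11.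
by rewrite hyperplaneE => /andP[_ /eqP]; rewrite -/(mrank I); lia.
Qed.
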